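(* Let $m\ge\ell\ge k\ge 1$ and let ${\mathcal{C}}={\mathcal{C}}[\ell+m,\ell,k]$ be the recursive code with all design parameters equal to $0$. Suppose that for every admissible triple $(n,\ell,k)$ a map ${\mathcal{D}}^{\mathcal{K}}_{n,\ell,k}$ from subspaces of the ambient space to ${\mathcal{K}}[n,\ell,k]\cup\{?\}$ is given which, on input $U$, returns $V\in{\mathcal{K}}[n,\ell,k]$ if $d(U,V)<\ell-k+1$ for some $V\in{\mathcal{K}}[n,\ell,k]$, and returns $?$ otherwise. Define the decoder ${\mathcal{D}}_{\ell+m,\ell,k}$ recursively: on input $U\subseteq W$, let $Z={\mathcal{D}}^{\mathcal{K}}_{\ell+m,\ell,k}(U)$; if $Z=?$ and $m\ge 2\ell$, let $U'=U|_{\mathbb{F}}$ and $V'={\mathcal{D}}_{m,\ell,k}(U')$, and if $V'\neq ?$ set $Z=\{0^\ell\}\times V'$; return $Z$. Let $V\in{\mathcal{C}}$ be transmitted and $U\subseteq W$ received, with $\dim U=\ell-\kappa+\gamma$ and $\dim(U\cap V)=\ell-\kappa$. If $\kappa+\gamma<\ell-k+1$, then ${\mathcal{D}}_{\ell+m,\ell,k}(U)=V$.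
   Context: Let $q$ be a prime power. Subspace distance: $d(U,V)=\dim U+\dim V-2\dim(U\cap V)$. For $W=\langle A\rangle\times\mathbb{F}$ and a subspace $U\subseteq W$, $U|_{\mathbb{F}}=\{v_2 : (v_1,v_2)\in U\}$. Kötter–Kschischang code ${\mathcal{K}}[n,\ell,k]$ (for $n-\ell \ge \ell \ge k \ge 1$): put $m=n-\ell$, $\mathbb{F}=\mathbb{F}_{q^m}$, fix $\mathbb{F}_q$-linearly independent $\alpha_1,\dots,\alpha_\ell \in \mathbb{F}$, let $\langle A\rangle$ be their $\mathbb{F}_q$-span and $W = \langle A\rangle \times \mathbb{F}$. For a linearized polynomial $f(x)=\sum_{i=0}^{k-1} f_i x^{q^i}$ with $f_i\in\mathbb{F}$, let ${\mathcal{E}}(f)=\mathrm{span}_{\mathbb{F}_q}\{(\alpha_i,f(\alpha_i)) : 1\le i\le \ell\}$, and ${\mathcal{K}}[n,\ell,k]=\{{\mathcal{E}}(f)\}$. Distinct elements of ${\mathcal{K}}$ intersect in dimension at most $k-1$. Any $n$-dimensional $\mathbb{F}_q$-space is identified with such a $W$ via a fixed linear isomorphism. Recursive code with all design parameters $0$: ${\mathcal{C}}[\ell+m,\ell,k]$ (for $m\ge\ell\ge k$) in $W=\langle A\rangle\times\mathbb{F}_{q^m}$ is defined by: if $m<2\ell$, ${\mathcal{C}}={\mathcal{K}}[\ell+m,\ell,k]$; otherwise, letting ${\mathcal{C}}[m,\ell,k]=\{U_1,\dots,U_N\}$ be the recursively constructed code inside $\mathbb{F}_{q^m}$ (viewed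 as an $m$-dimensional $\mathbb{F}_q$-space), ${\mathcal{C}}[\ell+m,\ell,k]={\mathcal{K}}[\ell+m,\ell,k]\cup\{\{0\}\times U_\sigma : 1\le\sigma\le N\}$. *)

From HB Require Import structures.
From mathcomp Require Import all_boot all_order all_algebra all_field.
Set Implicit Arguments. Unset Strict Implicit. Unset Printing Implicit Defensive.
Import GRing.Theory.
Local Open Scope ring_scope.

Definition subdist (K : fieldType) (vT : vectType K) (U V : {vspace vT}) : nat :=
  (\dim U + \dim V - 2 * \dim (U :&: V))%N.

Section Codes.
(* F = F_q ; E m = F_{q^m} (an extension of F of degree m) *)
Variable F : finFieldType.
Variable E : nat -> fieldExtType F.
Definition P m : vectType F := (E m * E m)%type.
Variables l k : nat.
Variable alpha : forall m, 'I_l -> E m.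
(* psi m : the fixed identification of the (l + (m-l))-dimensional space
   W_{m-l} = <A> x F_{q^{m-l}} with F_{q^m} (used when m >= 2l) *)
Variable psi : forall m, 'Hom(P (m - l)%N, E m).

Definition q := #|F|.

Definition inlF m : 'Hom(E m, P m) := linfun (fun x : E m => (x, 0)).
Definition inrF m : 'Hom(E m, P m) := linfun (fun x : E m => (0, x)).
Definition sndF m : 'Hom(P m, E m) := linfun (fun p : P m => p.2).

Definition spanA m : {vspace E m} := <<[seq alpha m i | i <- enum 'I_l]>>%VS.
Definition Wsp m : {vspace P m} :=
  (inlF m @: spanA m + inrF m @: fullv)%VS.

Definition linpoly m (c : 'I_k -> E m) (x : E m) : E m :=
  \sum_(i < k) c i * x ^+ (q ^ i)%N.

Definition Ef m (c : 'I_k -> E m) : {vspace P m} :=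
  <<[seq (alpha m i, linpoly c (alpha m i)) | i <- enum 'I_l]>>%VS.

Definition KKcode m (V : {vspace P m}) : Prop :=
  exists c : 'I_k -> E m, V = Ef c.

Definition lift0 m (V' : {vspace (P (m - l)%N)%type}) :
  {vspace P m} := (inrF m @: (psi m @: V'))%VS.

(* recursive code C[l+m, l, k] (all design parameters 0), with fuel *)
Fixpoint codeF (n : nat) (m : nat) : {vspace P m} -> Prop :=
  match n with
  | 0 => fun V => KKcode V
  | n'.+1 => fun V =>
      KKcode V \/
      ((2 * l <= m)%N /\ exists V', @codeF n' (m - l)%N V' /\ V = lift0 V')
  end.
Definition RCode m V := @codeF m m V.

(* pull back U|_F (a subspace of F_{q^m}) to a subspace of W_{m-l} *)
Definition pullback m (U : {vspace P m}) :
  {vspace (P (m - l)%N)%type} :=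
  ((psi m @^-1: (sndF m @: U)) :&: Wsp (m - l)%N)%VS.

(* the given KK decoders (None plays the role of '?') *)
Variable DK : forall m, {vspace P m} -> option {vspace P m}.

Fixpoint decF (n : nat) (m : nat) : {vspace P m} -> option {vspace P m} :=
  fun U =>
  match DK U with
  | Some Z => Some Z
  | None =>
    match n with
    | 0 => None
    | n'.+1 =>
      if (2 * l <= m)%N then
        match @decF n' (m - l)%N (pullback U) with
        | Some V' => Some (lift0 V')
        | None => None
        end
      else None
    end
  end.
Definition Dec m U := @decF m m U.

End Codes.

From Pilot Require Import Defs.
From HB Require Import structures.
From mathcomp Require Import all_boot all_order all_algebra all_field zify.

(* A codeword of C is either a Koetter-Kschischang codeword E(f), or a lifted
   codeword {0} x psi(V') with V' a codeword one recursion level down.  The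
   proof rests on three facts about these codewords:
   - every codeword lies in W and has dimension l, and a KK codeword meets
     the "right axis" {0} x F trivially (its first projection is <A>, of
     dimension l), whereas a lifted codeword lies inside that axis;
   - two trivially intersecting l-dimensional spaces cannot both lie at
     distance < l - k + 1 from a received space U (a packing bound), so when
     a lifted codeword is sent, the KK decoder answers '?';
   - restricting U to the second coordinate and pulling back along psi does
     not increase the distance to the transmitted codeword.
   Correctness then follows by induction on the recursion depth, and the
   theorem is the instance d(U,V) = (l-kappa+gamma) + l - 2(l-kappa). *)

Set Implicit Arguments. Unset Strict Implicit. Unset Printing Implicit Defensive.

Import GRing.Theory.
Local Open Scope ring_scope.

(* The two coordinate embeddings of a product of modules are linear; this
   lets [lfunE] evaluate the maps [inlF] and [inrF] of the code definition. *)
Section PairEmbeddings.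
Variables (R : nzRingType) (U V : lmodType R).

Definition inl_pair (x : U) : U * V := (x, 0).
Definition inr_pair (y : V) : U * V := (0, y).

Fact inl_pair_linear : linear inl_pair.
Proof. by move=> a x y; rewrite /inl_pair; congr (_, _); rewrite /= scaler0 addr0. Qed.
HB.instance Definition _ :=
  GRing.isLinear.Build R U (U * V)%type _ inl_pair inl_pair_linear.

Fact inr_pair_linear : linear inr_pair.
Proof. by move=> a x y; rewrite /inr_pair; congr (_, _); rewrite /= scaler0 addr0. Qed.
HB.instance Definition _ :=
  GRing.isLinear.Build R V (U * V)%type _ inr_pair inr_pair_linear.

End PairEmbeddings.

Section SubspaceFacts.
Variable K : fieldType.

Lemma dim_limg_leq (aT rT : vectType K) (f : 'Hom(aT, rT)) (U : {vspace aT}) :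
  (\dim (f @: U) <= \dim U)%N.
Proof. by rewrite -(limg_ker_dim f U) leq_addl. Qed.

Lemma span_full_image (aT rT : vectType K) (f : 'Hom(aT, rT)) (s : seq aT) :
  \dim (f @: <<s>>) = size s ->
  \dim <<s>> = size s /\ (<<s>> :&: lker f = 0)%VS.
Proof.
move=> dim_img; have := limg_ker_dim f <<s>>; rewrite dim_img => dim_split.
have ker0 : \dim (<<s>> :&: lker f) = 0%N.
  by have := dim_span s; rewrite -dim_split; lia.
by split; [lia | apply/eqP; rewrite -dimv_eq0 ker0].
Qed.

Lemma subdist_disjoint (vT : vectType K) (U X Y : {vspace vT}) :
  (X :&: Y = 0)%VS -> (\dim X + \dim Y <= subdist U X + subdist U Y)%N.
Proof.
move=> XY0.
have UXY0 : ((U :&: X) :&: (U :&: Y) = 0)%VS.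
  by apply/eqP; rewrite -subv0 -XY0 capvS ?capvSr.
have cap_sum : (\dim (U :&: X) + \dim (U :&: Y) <= \dim U)%N.
  by rewrite -dimv_disjoint_sum // dimvS // subv_add !capvSl.
have UX := dimvS (capvSl U X); have XU := dimvS (capvSr U X).
have UY := dimvS (capvSl U Y); have YU := dimvS (capvSr U Y).
rewrite /subdist; lia.
Qed.

Lemma subdist_mono (vT wT : vectType K)
    (U V : {vspace vT}) (U' V' : {vspace wT}) :
  (\dim U' <= \dim U)%N -> \dim V' = \dim V ->
  (\dim (U :&: V) <= \dim (U' :&: V'))%N ->
  (subdist U' V' <= subdist U V)%N.
Proof.
move=> dimU dimV dim_cap.
have U'V' := dimvS (capvSl U' V'); have V'U' := dimvS (capvSr U' V').
rewrite /subdist; lia.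
Qed.

End SubspaceFacts.

Section RecursiveCode.
Variables (F : finFieldType) (E : nat -> fieldExtType F).

(* The first projection W -> <A>, whose kernel is the right axis {0} x F;
   the remaining lemmas evaluate the coordinate maps of the definitions. *)
Definition fstF m : 'Hom(P E m, E m) := linfun fst.

Lemma fstFE m (x : P E m) : fstF m x = x.1.
Proof. exact: lfunE. Qed.

Lemma sndFE m (x : P E m) : sndF E m x = x.2.
Proof. exact: (@lfunE _ _ _ snd). Qed.

Lemma inlFE m (x : E m) : inlF E m x = (x, 0).
Proof. exact: (@lfunE _ _ _ (@inl_pair _ (E m) (E m))). Qed.

Lemma inrFE m (x : E m) : inrF E m x = (0, x).
Proof. exact: (@lfunE _ _ _ (@inr_pair _ (E m) (E m))). Qed.

Lemma lker_inrF m : lker (inrF E m) = 0%VS.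
Proof. by apply/eqP/lker0P => x y; rewrite !inrFE => -[]. Qed.

Lemma inrF_sub_lker_fst m (X : {vspace E m}) : (inrF E m @: X <= lker (fstF m))%VS.
Proof. by apply/subvP => _ /memv_imgP [x _ ->]; rewrite memv_ker fstFE inrFE. Qed.

Variables (l k : nat) (alpha : forall m, 'I_l -> E m)
  (psi : forall m, 'Hom(P E (m - l)%N, E m)).

Hypothesis alpha_free :
  forall m, (l <= m)%N -> free [seq alpha m i | i <- enum 'I_l].
Hypothesis psi_iso : forall m, (2 * l <= m)%N ->
  (lker (psi m) :&: Wsp alpha (m - l)%N = 0)%VS /\
  (psi m @: Wsp alpha (m - l)%N = fullv)%VS.

Lemma psi_cap_lker m (X : {vspace P E (m - l)%N}) : (2 * l <= m)%N ->
  (X <= Wsp alpha (m - l)%N)%VS -> (X :&: lker (psi m) = 0)%VS.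
Proof.
move=> /psi_iso [ker_psi _] XW.
by apply/eqP; rewrite -subv0 -ker_psi capvC capvS.
Qed.

Lemma Ef_sub_W m (c : 'I_k -> E m) : (Ef alpha c <= Wsp alpha m)%VS.
Proof.
apply/span_subvP => _ /mapP [i _ ->].
have -> : (alpha m i, linpoly c (alpha m i)) =
          inlF E m (alpha m i) + inrF E m (linpoly c (alpha m i)).
  by rewrite inlFE inrFE; congr (_, _); rewrite /= ?addr0 ?add0r.
by rewrite memv_add ?memv_img ?memvf // memv_span ?map_f ?mem_enum.
Qed.

(* A KK codeword has dimension l and meets the right axis trivially, since
   its first projection is the l-dimensional space <A>. *)
Lemma Ef_dim m (c : 'I_k -> E m) : (l <= m)%N ->
  \dim (Ef alpha c) = l /\ (Ef alpha c :&: lker (fstF m) = 0)%VS.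
Proof.
move=> lm; have := @span_full_image _ _ _ (fstF m)
  [seq (alpha m i, linpoly c (alpha m i)) | i <- enum 'I_l].
rewrite size_map size_enum_ord; apply.
rewrite limg_span -map_comp.
have := alpha_free lm; rewrite /free size_map size_enum_ord => /eqP dimA.
by apply: etrans dimA; congr (\dim << _ >>); apply: eq_map => i /=; rewrite fstFE.
Qed.

Lemma half_level m : (2 * l <= m)%N -> (l <= m - l)%N.
Proof. lia. Qed.

Lemma lift0_props m (V' : {vspace P E (m - l)%N}) : (2 * l <= m)%N ->
  (V' <= Wsp alpha (m - l)%N)%VS ->
  (Defs.lift0 psi V' <= lker (fstF m))%VS /\ \dim (Defs.lift0 psi V') = \dim V'.
Proof.
move=> l2m V'W; split; first exact: inrF_sub_lker_fst.
by rewrite /Defs.lift0 limg_dim_eq ?lker_inrF ?capv0 // limg_dim_eq ?psi_cap_lker.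
Qed.

Lemma code_sub_W_dim n m (V : {vspace P E m}) : (l <= m)%N ->
  codeF k alpha psi n V -> (V <= Wsp alpha m)%VS /\ \dim V = l.
Proof.
elim: n m V => [|n IH] m V lm /=; first by case=> c ->; rewrite Ef_sub_W (proj1 (Ef_dim c lm)).
case=> [[c ->]|[l2m [V' [codeV' ->]]]]; first by rewrite Ef_sub_W (proj1 (Ef_dim c lm)).
have [V'W dimV'] := IH _ _ (half_level l2m) codeV'.
have [_ ->] := lift0_props l2m V'W; split=> //.
exact: subv_trans (limgS _ (subvf _)) (addvSr _ _).
Qed.

Lemma subdist_pullback m (U : {vspace P E m}) (V' : {vspace P E (m - l)%N}) :
  (2 * l <= m)%N -> (V' <= Wsp alpha (m - l)%N)%VS ->
  (subdist (pullback alpha psi U) V' <= subdist U (Defs.lift0 psi V'))%N.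
Proof.
move=> l2m V'W; set U' := pullback alpha psi U.
have U'W : (U' <= Wsp alpha (m - l)%N)%VS by exact: capvSr.
have psiU' : (psi m @: U' <= sndF E m @: U)%VS.
  by apply/subvP => _ /memv_imgP [x /memv_capP [+ _] ->]; rewrite -memv_preim.
apply: subdist_mono; last 2 first.
- by rewrite (proj2 (lift0_props l2m V'W)).
- set h := (inrF E m \o psi m)%VF.
  apply: leq_trans (dim_limg_leq h (U' :&: V')%VS); apply: dimvS.
  apply/subvP => z /memv_capP [zU /memv_imgP [y /memv_imgP [x xV' ->] defz]].
  have {defz} defz : z = h x by rewrite defz comp_lfunE.
  rewrite defz in zU *; rewrite memv_img // memv_cap xV' andbT memv_cap (subvP V'W _ xV') andbT -memv_preim.
  have -> : psi m x = sndF E m (h x) by rewrite sndFE comp_lfunE inrFE.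
  exact: memv_img.
rewrite -(limg_dim_eq (psi_cap_lker l2m U'W)).
exact: leq_trans (dimvS psiU') (dim_limg_leq _ _).
Qed.

Variable DK : forall m, {vspace P E m} -> option {vspace P E m}.
Hypotheses (k_gt0 : (1 <= k)%N) (k_le_l : (k <= l)%N).
Hypothesis DK_spec : forall m, (l <= m)%N -> forall U : {vspace P E m},
  (U <= Wsp alpha m)%VS ->
  (forall V, KKcode k alpha V -> (subdist U V < l - k + 1)%N -> DK U = Some V) /\
  ((forall V, KKcode k alpha V -> ~ (subdist U V < l - k + 1)%N) -> DK U = None).

(* When U is within the decoding radius of a subspace of the right axis of
   dimension l, the KK decoder fails on U: every KK codeword meets that
   subspace trivially, so the packing bound forbids it to be close to U too. *)
Lemma DK_fails_near_axis m (U V : {vspace P E m}) : (l <= m)%N ->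
  (U <= Wsp alpha m)%VS -> (V <= lker (fstF m))%VS -> \dim V = l ->
  (subdist U V < l - k + 1)%N -> DK U = None.
Proof.
move=> lm UW V_axis dimV close; apply: (proj2 (DK_spec lm UW)) => _ [c ->] close0.
have [dimEf Ef_axis0] := Ef_dim c lm.
have disj : (V :&: Ef alpha c = 0)%VS.
  by apply/eqP; rewrite -subv0 -Ef_axis0 capvC capvS.
by have := subdist_disjoint U disj; rewrite dimV dimEf; lia.
Qed.

Lemma decF_correct n m (V U : {vspace P E m}) : (l <= m)%N ->
  codeF k alpha psi n V -> (U <= Wsp alpha m)%VS ->
  (subdist U V < l - k + 1)%N -> decF alpha psi DK n U = Some V.
Proof.
elim: n m V U => [|n IH] m V U lm codeV UW close.
  by rewrite /= (proj1 (DK_spec lm UW) V codeV close).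
case: (codeV) => [KKV|[l2m [V' [codeV' defV]]]].
  by rewrite /= (proj1 (DK_spec lm UW) V KKV close).
have [V'W _] := code_sub_W_dim (half_level l2m) codeV'.
have [_ dimV] := code_sub_W_dim lm codeV.
have V_axis : (V <= lker (fstF m))%VS by rewrite defV (proj1 (lift0_props l2m V'W)).
rewrite /= (DK_fails_near_axis lm UW V_axis dimV close) l2m defV.
rewrite (IH _ V' _ (half_level l2m) codeV' (capvSr _ _)) //.
by apply: leq_ltn_trans (subdist_pullback U l2m V'W) _; rewrite -defV.
Qed.

End RecursiveCode.

Lemma subdist_kappa_gamma (l k kappa gamma : nat) :
  (kappa + gamma < l - k + 1)%N ->
  ((l - kappa + gamma) + l - 2 * (l - kappa) < l - k + 1)%N.
Proof. lia. Qed.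

Theorem mainTheorem4
  (F : finFieldType) (E : nat -> fieldExtType F)
  (l k m : nat)
  (alpha : forall m', 'I_l -> E m')
  (psi : forall m', 'Hom(P E (m' - l)%N, E m'))
  (DK : forall m', {vspace P E m'} -> option {vspace P E m'}) :
  (1 <= k)%N -> (k <= l)%N -> (l <= m)%N ->
  (* E m' is F_{q^m'}: an extension of F = F_q of degree m' *)
  (forall m', (0 < m')%N -> \dim {: E m'} = m') ->
  (* alpha_1..alpha_l are F_q-linearly independent in F_{q^m'} *)
  (forall m', (l <= m')%N -> free [seq alpha m' i | i <- enum 'I_l]) ->
  (* psi m' is a linear isomorphism from W_{m'-l} = <A> x F_{q^(m'-l)} onto F_{q^m'} *)
  (forall m', (2 * l <= m')%N ->
     (lker (psi m') :&: Wsp alpha (m' - l)%N = 0)%VS /\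
     (psi m' @: Wsp alpha (m' - l)%N = fullv)%VS) ->
  (* specification of the Koetter-Kschischang decoders *)
  (forall m', (l <= m')%N -> forall U : {vspace P E m'},
     (U <= Wsp alpha m')%VS ->
     (forall V, KKcode k alpha V -> (subdist U V < l - k + 1)%N -> DK m' U = Some V) /\
     ((forall V, KKcode k alpha V -> ~ (subdist U V < l - k + 1)%N) -> DK m' U = None)) ->
  forall (V U : {vspace P E m}) (kappa gamma : nat),
    RCode k alpha psi V ->
    (U <= Wsp alpha m)%VS ->
    \dim U = (l - kappa + gamma)%N ->
    \dim (U :&: V)%VS = (l - kappa)%N ->
    (kappa + gamma < l - k + 1)%N ->
    Dec alpha psi DK U = Some V.
Proof.
move=> k_gt0 k_le_l lm _ alpha_free psi_iso DK_spec V U kappa gamma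
  codeV UW dimU dim_cap radius.
have [_ dimV] := code_sub_W_dim alpha_free psi_iso lm codeV.
apply: (decF_correct alpha_free psi_iso k_gt0 k_le_l DK_spec lm codeV UW).
by rewrite /subdist dimU dim_cap dimV subdist_kappa_gamma.
Qed.
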